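(* Let $X_\lambda$ be a cellular multipointed $d$-space and let $\gamma_1,\gamma_2$ be execution paths of $X_\lambda$ such that there exist two nondecreasing set maps $\phi_1,\phi_2:[0,1]\to[0,1]$ (not assumed continuous) with $\phi_i(0)=0$, $\phi_i(1)=1$, and $\gamma_1(\phi_1(t))=\gamma_2(t)$, $\gamma_1(t)=\gamma_2(\phi_2(t))$ for all $t\in[0,1]$. Then $\phi_1,\phi_2\in\mathcal{G}(1,1)$ and $\phi_2=\phi_1^{-1}$.
   Context: Work in $\mathbf{Top}$, the category of $\Delta$-generated spaces (or $\Delta$-Hausdorff $\Delta$-generated spaces). $\mathcal{G}(1,1)$: the nondecreasing homeomorphisms of $[0,1]$; $*_N$: normalized composition of paths on $[0,1]$ (first path on $[0,1/2]$, second on $[1/2,1]$, double speed). A multipointed $d$-space $X=(|X|,X^0,\mathbb{P}^{\mathcal{G}}X)$: a space, a subset of states, a set of continuous execution paths $[0,1]\to|X|$ with endpoints in $X^0$, stable under precomposition by $\mathcal{G}(1,1)$ and $*_N$. Colimits: underlying spaces and states by colimits, execution paths generated by images under $*_N$ and reparametrization. ${\rm Glob}^{\mathcal{G}}(Z)$: quotient of $\{0,1\}\sqcup Z\times[0,1]$ with $(z,0)\sim0$, $(z,1)\sim1$, states $\{0,1\}$, paths $t\mapsto(z,\phi(t))$, $\phi\in\mathcal{G}(1,1)$. Cellular: $X_\lambda=\varinjlim_{\nu<\lambda}X_\nu$ for an ordinal $\lambda$ and colimit-preserving $\nu\mapsto X_\nu$ with $X_0=(X^0,X^0,\varnothing)$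 a set and each $X_\nu\to X_{\nu+1}$ a pushout of some ${\rm Glob}^{\mathcal{G}}(\mathbf{S}^{n_\nu-1})\subset{\rm Glob}^{\mathcal{G}}(\mathbf{D}^{n_\nu})$. *)

From Stdlib Require Import Reals Lra.
Open Scope R_scope.

Record Space := { pt :> Type; opn : (pt -> Prop) -> Prop }.

Definition is_topology (X : Space) : Prop :=
  opn X (fun _ => True) /\
  (forall U V, opn X U -> opn X V -> opn X (fun x => U x /\ V x)) /\
  (forall F : (pt X -> Prop) -> Prop, (forall U, F U -> opn X U) ->
     opn X (fun x => exists U, F U /\ U x)).

Definition continuous (X Y : Space) (f : X -> Y) : Prop :=
  forall U, opn Y U -> opn X (fun x => U (f x)).

Definition metric_opens {A : Type} (d : A -> A -> R) (U : A -> Prop) : Prop :=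
  forall x, U x -> exists eps, 0 < eps /\ forall y, d x y < eps -> U y.

Definition I01 := {t : R | 0 <= t <= 1}.
Definition Ispace : Space :=
  {| pt := I01; opn := metric_opens (fun s t : I01 => Rabs (proj1_sig s - proj1_sig t)) |}.
Definition I0 : I01 := exist _ 0 (conj (Rle_refl 0) Rle_0_1).
Definition I1 : I01 := exist _ 1 (conj Rle_0_1 (Rle_refl 1)).

Lemma clamp_prf (t : R) : 0 <= Rmin 1 (Rmax 0 t) <= 1.
Proof. unfold Rmin, Rmax; repeat destruct Rle_dec; lra. Qed.
Definition clamp (t : R) : I01 := exist _ (Rmin 1 (Rmax 0 t)) (clamp_prf t).

Definition concatN {A : Type} (g1 g2 : I01 -> A) : I01 -> A :=
  fun t => if Rle_dec (proj1_sig t) (1/2) then g1 (clamp (2 * proj1_sig t))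
           else g2 (clamp (2 * proj1_sig t - 1)).

Definition nondecr (phi : I01 -> I01) : Prop :=
  forall s t, proj1_sig s <= proj1_sig t -> proj1_sig (phi s) <= proj1_sig (phi t).

Definition in_G11 (phi : I01 -> I01) : Prop :=
  nondecr phi /\ continuous Ispace Ispace phi /\
  exists psi : I01 -> I01, continuous Ispace Ispace psi /\
    (forall t, psi (phi t) = t) /\ (forall t, phi (psi t) = t).

Record MdSpace := { msp :> Space; states : msp -> Prop; paths : (I01 -> msp) -> Prop }.

Definition is_md (X : MdSpace) : Prop :=
  is_topology X /\
  (forall g, paths X g -> continuous Ispace X g /\ states X (g I0) /\ states X (g I1)) /\
  (forall g phi, paths X g -> in_G11 phi -> paths X (fun t => g (phi t))) /\
  (forall g1 g2, paths X g1 -> paths X g2 -> g1 I1 = g2 I0 -> paths X (concatN g1 g2)).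

Definition is_mor (X Y : MdSpace) (f : X -> Y) : Prop :=
  continuous X Y f /\ (forall x, states X x -> states Y (f x)) /\
  (forall g, paths X g -> paths Y (fun t => f (g t))).

(** * Disks and spheres: D^n and S^(n-1) in R^n (Euclidean subspace topology) *)
Fixpoint sumsq (n : nat) (x : nat -> R) : R :=
  match n with O => 0 | S k => sumsq k x + x k * x k end.
Definition eucl (n : nat) (x y : nat -> R) : R := sqrt (sumsq n (fun i => x i - y i)).

Definition Disk (n : nat) := {x : nat -> R | (forall i, (n <= i)%nat -> x i = 0) /\ sumsq n x <= 1}.
Definition Sph (n : nat) := {x : nat -> R | (forall i, (n <= i)%nat -> x i = 0) /\ sumsq n x = 1}.
Definition DiskSp (n : nat) : Space :=
  {| pt := Disk n; opn := metric_opens (fun x y : Disk n => eucl n (proj1_sig x) (proj1_sig y)) |}.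
Definition SphSp (n : nat) : Space :=
  {| pt := Sph n; opn := metric_opens (fun x y : Sph n => eucl n (proj1_sig x) (proj1_sig y)) |}.
Definition sph_incl (n : nat) (x : Sph n) : Disk n :=
  exist _ (proj1_sig x) (conj (proj1 (proj2_sig x)) (Req_le _ _ (proj2 (proj2_sig x)))).

Definition prodI (Z : Space) : Space :=
  {| pt := (pt Z * I01)%type;
     opn := fun W => forall p, W p -> exists U V, opn Z U /\ opn Ispace V /\
              U (fst p) /\ V (snd p) /\ forall a b, U a -> V b -> W (a, b) |}.

(** * Glob(Z): quotient of {0,1} + Z x [0,1] identifying (z,0)~0, (z,1)~1.
    Carrier modelled by the set of equivalence classes; topology = quotient topology. *)
Definition O01 := {t : R | 0 < t < 1}.
Inductive gpt (Z : Type) := gbot | gtop | gin (z : Z) (t : O01).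
Arguments gbot {Z}. Arguments gtop {Z}. Arguments gin {Z} z t.

(** qrel p g : the class of p : Z x [0,1] is g *)
Definition qrel {Z : Type} (p : Z * I01) (g : gpt Z) : Prop :=
  match g with
  | gbot => proj1_sig (snd p) = 0
  | gtop => proj1_sig (snd p) = 1
  | gin z t => z = fst p /\ proj1_sig t = proj1_sig (snd p)
  end.

Definition GlobSp (Z : Space) : Space :=
  {| pt := gpt Z;
     opn := fun U => opn (prodI Z) (fun p => exists g, qrel p g /\ U g) |}.

Definition Glob (Z : Space) : MdSpace :=
  {| msp := GlobSp Z;
     states := fun g => g = gbot \/ g = gtop;
     paths := fun gam => exists (z : Z) (phi : I01 -> I01),
                in_G11 phi /\ forall t, qrel (z, phi t) (gam t) |}.

Definition glob_map {Z Z' : Type} (f : Z -> Z') (g : gpt Z) : gpt Z' :=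
  match g with gbot => gbot | gtop => gtop | gin z t => gin (f z) t end.

Definition is_pushout {A B C P : MdSpace} (f : A -> B) (g : A -> C)
  (i : B -> P) (j : C -> P) : Prop :=
  is_mor B P i /\ is_mor C P j /\ (forall a, i (f a) = j (g a)) /\
  forall Q : MdSpace, is_md Q -> forall (b : B -> Q) (c : C -> Q),
    is_mor B Q b -> is_mor C Q c -> (forall a, b (f a) = c (g a)) ->
    (exists u : P -> Q, is_mor P Q u /\ (forall x, u (i x) = b x) /\ (forall y, u (j y) = c y)) /\
    (forall u u' : P -> Q, is_mor P Q u -> is_mor P Q u' ->
       (forall x, u (i x) = b x) -> (forall y, u (j y) = c y) ->
       (forall x, u' (i x) = b x) -> (forall y, u' (j y) = c y) ->
       forall p, u p = u' p).

Definition leo {O : Type} (lt : O -> O -> Prop) (a b : O) : Prop := lt a b \/ a = b.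

Definition is_colim {O : Type} (lt : O -> O -> Prop) (X : O -> MdSpace)
  (m : forall a b, X a -> X b) (P : O -> Prop) (V : MdSpace) (l : forall a, X a -> V) : Prop :=
  (forall a, P a -> is_mor (X a) V (l a)) /\
  (forall a b, P a -> P b -> leo lt a b -> forall x, l b (m a b x) = l a x) /\
  forall Q : MdSpace, is_md Q -> forall q : forall a, X a -> Q,
    (forall a, P a -> is_mor (X a) Q (q a)) ->
    (forall a b, P a -> P b -> leo lt a b -> forall x, q b (m a b x) = q a x) ->
    (exists u : V -> Q, is_mor V Q u /\ forall a, P a -> forall x, u (l a x) = q a x) /\
    (forall u u' : V -> Q, is_mor V Q u -> is_mor V Q u' ->
       (forall a, P a -> forall x, u (l a x) = q a x) ->
       (forall a, P a -> forall x, u' (l a x) = q a x) -> forall v, u v = u' v).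

(** ordinals as well-ordered types *)
Definition well_order {O : Type} (lt : O -> O -> Prop) : Prop :=
  (forall a b c, lt a b -> lt b c -> lt a c) /\ (forall a, ~ lt a a) /\
  (forall a b, lt a b \/ a = b \/ lt b a) /\ well_founded lt.

Definition discrete_md (X : MdSpace) : Prop :=
  (forall x, states X x) /\ (forall U, opn X U) /\ (forall g, ~ paths X g).

(** a colimit-preserving functor nu |-> X_nu from the ordinal O, with X_0 a set
    and each X_nu -> X_(nu+1) a pushout of Glob(S^(n-1)) -> Glob(D^n) *)
Definition is_cell_tower {O : Type} (lt : O -> O -> Prop) (X : O -> MdSpace)
  (m : forall a b, X a -> X b) : Prop :=
  well_order lt /\
  (forall a, is_md (X a)) /\
  (forall a b, leo lt a b -> is_mor (X a) (X b) (m a b)) /\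
  (forall a x, m a a x = x) /\
  (forall a b c, leo lt a b -> leo lt b c -> forall x, m b c (m a b x) = m a c x) /\
  (forall a, (forall b, ~ lt b a) -> discrete_md (X a)) /\
  (forall a a', lt a a' -> (forall c, ~ (lt a c /\ lt c a')) ->
     exists (n : nat) (g : Glob (SphSp n) -> X a) (k : Glob (DiskSp n) -> X a'),
       is_mor (Glob (SphSp n)) (X a) g /\
       @is_pushout (Glob (SphSp n)) (Glob (DiskSp n)) (X a) (X a')
         (glob_map (sph_incl n)) g k (m a a')) /\
  (forall a, (exists b, lt b a) -> (forall b, lt b a -> exists c, lt b c /\ lt c a) ->
     is_colim lt X m (fun b => lt b a) (X a) (fun b => m b a)).

Definition cellular (Y : MdSpace) : Prop :=
  is_md Y /\
  exists (O : Type) (lt : O -> O -> Prop) (X : O -> MdSpace) (m : forall a b, X a -> X b)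
         (l : forall a, X a -> Y),
    is_cell_tower lt X m /\ is_colim lt X m (fun _ => True) Y l.

(* Every cellular multipointed d-space maps to the directed circle so that each globular cell
   winds once around it; the image of an execution path is then a loop p with a strictly
   increasing lift F : [0,1] -> R onto an interval.  Such a loop is rigid: if psi is
   nondecreasing and p o psi = p, then G = F o psi - F is integer valued and cannot drop across
   an F-increment smaller than 1, so chaining through the interval F([0,1]) it is nondecreasing;
   as G(0) >= 0 >= G(1), G = 0 and psi = id.  Applied to phi1 o phi2 and phi2 o phi1, this makes
   phi1 and phi2 mutually inverse nondecreasing bijections, hence homeomorphisms. *)

From Stdlib Require Import Reals Lra Lia Classical ProofIrrelevance
  FunctionalExtensionality ClassicalEpsilon.
Open Scope R_scope.

(** * Monotone maps of the unit interval *)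

Lemma I01_eq (s t : I01) : proj1_sig s = proj1_sig t -> s = t.
Proof.
  destruct s as [x hx], t as [y hy]; simpl; intros ->.
  f_equal; apply proof_irrelevance.
Qed.

Lemma clamp_val (x : R) : 0 <= x <= 1 -> proj1_sig (clamp x) = x.
Proof. intros H; unfold clamp; simpl; unfold Rmin, Rmax; repeat destruct Rle_dec; lra. Qed.

Lemma clamp_eq (x : R) (s : I01) : x = proj1_sig s -> clamp x = s.
Proof. intros ->; apply I01_eq, clamp_val, proj2_sig. Qed.

Definition strict_incr (F : I01 -> R) : Prop :=
  forall s t, proj1_sig s < proj1_sig t -> F s < F t.

Definition onto_interval (F : I01 -> R) : Prop :=
  forall y, F I0 <= y <= F I1 -> exists s, F s = y.

Section StrictIncr.
Variable F : I01 -> R.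
Hypothesis HF : strict_incr F.

Lemma strict_incr_le s t : proj1_sig s <= proj1_sig t -> F s <= F t.
Proof.
  intros [h | h%I01_eq]; [left; apply HF, h | right; subst; reflexivity].
Qed.

Lemma strict_incr_inj s t : F s = F t -> s = t.
Proof.
  intros E; apply I01_eq.
  destruct (Rtotal_order (proj1_sig s) (proj1_sig t)) as [h | [h | h]];
    [apply HF in h | exact h | apply HF in h]; lra.
Qed.

Lemma strict_incr_lt_reflect s t : F s < F t -> proj1_sig s < proj1_sig t.
Proof.
  intros h; apply Rnot_le_lt; intros h'.
  apply strict_incr_le in h'; lra.
Qed.

Lemma strict_incr_bounds s : F I0 <= F s <= F I1.
Proof. pose proof (proj2_sig s); split; apply strict_incr_le; simpl; lra. Qed.

End StrictIncr.

Lemma nondecr_inj_strict (phi psi : I01 -> I01) :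
  nondecr phi -> (forall t, psi (phi t) = t) -> strict_incr (fun t => proj1_sig (phi t)).
Proof.
  intros Hphi Hinv s t h.
  destruct (Hphi s t (Rlt_le _ _ h)) as [h' | E%I01_eq]; [exact h' |].
  rewrite <- (Hinv s), <- (Hinv t), E in h; lra.
Qed.

Lemma nondecr_surj_I0 (phi : I01 -> I01) :
  nondecr phi -> (forall y, exists t, phi t = y) -> phi I0 = I0.
Proof.
  intros Hphi Hsurj; destruct (Hsurj I0) as [t Ht].
  pose proof (Hphi I0 t (proj1 (proj2_sig t))) as h; rewrite Ht in h.
  apply I01_eq; pose proof (proj2_sig (phi I0)); simpl in *; lra.
Qed.

Lemma nondecr_surj_I1 (phi : I01 -> I01) :
  nondecr phi -> (forall y, exists t, phi t = y) -> phi I1 = I1.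
Proof.
  intros Hphi Hsurj; destruct (Hsurj I1) as [t Ht].
  pose proof (Hphi t I1 (proj2 (proj2_sig t))) as h; rewrite Ht in h.
  apply I01_eq; pose proof (proj2_sig (phi I1)); simpl in *; lra.
Qed.

Section NondecrSurj.
Variable f : I01 -> I01.
Hypotheses (Hf : nondecr f) (Hsurj : forall y, exists x, f x = y).

Lemma nondecr_surj_lower x eps : 0 < eps -> exists d, 0 < d /\
  forall y, proj1_sig x - d < proj1_sig y -> proj1_sig (f x) - eps < proj1_sig (f y).
Proof.
  intros He; pose proof (proj2_sig (f x)) as Bx.
  destruct (Rlt_le_dec (proj1_sig (f x)) eps) as [h | h].
  - exists 1; split; [lra |]; intros y _; pose proof (proj2_sig (f y)); simpl in *; lra.
  - destruct (Hsurj (clamp (proj1_sig (f x) - eps / 2))) as [a Ha].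
    assert (Va : proj1_sig (f a) = proj1_sig (f x) - eps / 2)
      by (rewrite Ha; apply clamp_val; simpl in *; lra).
    assert (Hax : proj1_sig a < proj1_sig x).
    { apply Rnot_le_lt; intros h'; apply Hf in h'; lra. }
    exists (proj1_sig x - proj1_sig a); split; [lra |].
    intros y hy; pose proof (Hf a y ltac:(lra)); lra.
Qed.

Lemma nondecr_surj_upper x eps : 0 < eps -> exists d, 0 < d /\
  forall y, proj1_sig y < proj1_sig x + d -> proj1_sig (f y) < proj1_sig (f x) + eps.
Proof.
  intros He; pose proof (proj2_sig (f x)) as Bx.
  destruct (Rlt_le_dec (1 - eps) (proj1_sig (f x))) as [h | h].
  - exists 1; split; [lra |]; intros y _; pose proof (proj2_sig (f y)); simpl in *; lra.
  - destruct (Hsurj (clamp (proj1_sig (f x) + eps / 2))) as [b Hb].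
    assert (Vb : proj1_sig (f b) = proj1_sig (f x) + eps / 2)
      by (rewrite Hb; apply clamp_val; simpl in *; lra).
    assert (Hxb : proj1_sig x < proj1_sig b).
    { apply Rnot_le_lt; intros h'; apply Hf in h'; lra. }
    exists (proj1_sig b - proj1_sig x); split; [lra |].
    intros y hy; pose proof (Hf y b ltac:(lra)); lra.
Qed.

Lemma nondecr_surj_continuous : continuous Ispace Ispace f.
Proof.
  intros U HU x Ux; simpl in *.
  destruct (HU (f x) Ux) as [eps [He Hball]].
  destruct (nondecr_surj_lower x eps He) as [d1 [Hd1 L]].
  destruct (nondecr_surj_upper x eps He) as [d2 [Hd2 R]].
  exists (Rmin d1 d2); split; [apply Rmin_pos; assumption |].
  intros y hy; apply Hball.
  pose proof (Rmin_l d1 d2); pose proof (Rmin_r d1 d2).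
  apply Rabs_def2 in hy; destruct hy.
  pose proof (L y ltac:(lra)); pose proof (R y ltac:(lra)).
  apply Rabs_def1; lra.
Qed.

End NondecrSurj.

Lemma G11_of_inverse (phi psi : I01 -> I01) :
  nondecr phi -> nondecr psi ->
  (forall t, psi (phi t) = t) -> (forall t, phi (psi t) = t) -> in_G11 phi.
Proof.
  intros Hphi Hpsi H1 H2.
  split; [exact Hphi | split].
  - apply nondecr_surj_continuous; [exact Hphi | intros y; exists (psi y); apply H2].
  - exists psi; split; [| split; assumption].
    apply nondecr_surj_continuous; [exact Hpsi | intros y; exists (phi y); apply H1].
Qed.

Section G11.
Variable phi : I01 -> I01.
Hypothesis Hphi : in_G11 phi.

Lemma G11_surj y : exists t, phi t = y.
Proof. destruct Hphi as (_ & _ & psi & _ & _ & H); exists (psi y); apply H. Qed.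

Lemma G11_strict : strict_incr (fun t => proj1_sig (phi t)).
Proof.
  destruct Hphi as (H & _ & psi & _ & Hinv & _); exact (nondecr_inj_strict phi psi H Hinv).
Qed.

Lemma G11_I0 : phi I0 = I0.
Proof. apply nondecr_surj_I0; [apply Hphi | exact G11_surj]. Qed.

Lemma G11_I1 : phi I1 = I1.
Proof. apply nondecr_surj_I1; [apply Hphi | exact G11_surj]. Qed.

Lemma G11_onto : onto_interval (fun t => proj1_sig (phi t)).
Proof.
  intros y; rewrite G11_I0, G11_I1; simpl; intros hy.
  destruct (G11_surj (clamp y)) as [t Ht].
  exists t; rewrite Ht; apply clamp_val, hy.
Qed.

End G11.

(** * Loops with a monotone lift *)

Definition integral (r : R) : Prop := exists n : Z, r = IZR n.

Lemma integral_sub r r' : integral r -> integral r' -> integral (r - r').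
Proof. intros [n ->] [n' ->]; exists (n - n')%Z; rewrite minus_IZR; reflexivity. Qed.

Lemma integral_gt_m1_ge0 r : integral r -> -1 < r -> 0 <= r.
Proof.
  intros [n ->] h; apply IZR_le.
  assert (-1 < n)%Z by (apply lt_IZR; exact h); lia.
Qed.

Definition lift (p F : I01 -> R) : Prop :=
  strict_incr F /\ onto_interval F /\ forall s, integral (p s - F s).

Section Chain.
Variable F : I01 -> R.
Hypotheses (HF : strict_incr F) (Honto : onto_interval F).

Lemma chain_monotone (G : I01 -> R) :
  (forall s t, proj1_sig s <= proj1_sig t -> F t - F s < 1 -> G s <= G t) ->
  forall s t, proj1_sig s <= proj1_sig t -> G s <= G t.
Proof.
  intros Hloc.
  assert (Hn : forall n s t, proj1_sig s <= proj1_sig t -> F t - F s <= INR n / 2 ->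
                 G s <= G t).
  { induction n as [| n IH]; intros s t hst hF.
    - apply Hloc; simpl in hF; lra.
    - destruct (Rlt_le_dec (F t - F s) 1) as [h | h]; [apply Hloc; assumption |].
      pose proof (strict_incr_bounds F HF s); pose proof (strict_incr_bounds F HF t).
      destruct (Honto (F t - 1/2) ltac:(lra)) as [u Hu].
      assert (proj1_sig s <= proj1_sig u)
        by (apply Rlt_le, (strict_incr_lt_reflect F HF); lra).
      assert (proj1_sig u <= proj1_sig t)
        by (apply Rlt_le, (strict_incr_lt_reflect F HF); lra).
      rewrite S_INR in hF.
      apply Rle_trans with (G u); [apply IH | apply Hloc]; auto; lra. }
  intros s t hst.
  destruct (INR_archimed (1/2) (F t - F s) ltac:(lra)) as [n hn].
  apply (Hn n); [exact hst | lra].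
Qed.

End Chain.

Lemma lift_rigid (p F : I01 -> R) (psi : I01 -> I01) :
  lift p F -> nondecr psi -> (forall s, p (psi s) = p s) -> forall s, psi s = s.
Proof.
  intros (HF & Honto & Hint) Hpsi Hp.
  set (G s := F (psi s) - F s).
  assert (HG : forall s, integral (G s)).
  { intros s; replace (G s) with ((p s - F s) - (p (psi s) - F (psi s)))
      by (unfold G; rewrite Hp; ring).
    apply integral_sub; apply Hint. }
  assert (Gmono : forall s t, proj1_sig s <= proj1_sig t -> G s <= G t).
  { apply (chain_monotone F HF Honto); intros s t hst hF.
    pose proof (strict_incr_le F HF _ _ (Hpsi s t hst)).
    assert (0 <= G t - G s); [| lra].
    apply integral_gt_m1_ge0; [apply integral_sub; apply HG | unfold G; lra]. }
  assert (0 <= G I0)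
    by (pose proof (strict_incr_le F HF I0 (psi I0) (proj1 (proj2_sig (psi I0)))); unfold G; lra).
  assert (G I1 <= 0)
    by (pose proof (strict_incr_le F HF (psi I1) I1 (proj2 (proj2_sig (psi I1)))); unfold G; lra).
  intros s; apply (strict_incr_inj F HF).
  pose proof (Gmono I0 s (proj1 (proj2_sig s))); pose proof (Gmono s I1 (proj2 (proj2_sig s))).
  unfold G in *; lra.
Qed.

Definition winding (p : I01 -> R) : Prop :=
  p I0 = 0 /\ p I1 = 0 /\ exists F, lift p F.

(* The directed circle R/Z with base point 0, represented on R: only the class of a point modulo
   Z enters [lift], and the topology is indiscrete. *)
Definition dcircle_space : Space :=
  {| pt := R; opn := fun U => (forall x, U x) \/ (forall x, ~ U x) |}.

Definition dcircle : MdSpace :=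
  {| msp := dcircle_space; states := fun r => r = 0; paths := winding |}.

Lemma continuous_into_dcircle (A : Space) (f : A -> R) :
  (forall U, (forall x, U x) -> opn A U) -> (forall U, (forall x, ~ U x) -> opn A U) ->
  continuous A dcircle f.
Proof. intros Hfull Hempty U [HU | HU]; [apply Hfull | apply Hempty]; intros x; apply HU. Qed.

Lemma dcircle_topology : is_topology dcircle.
Proof.
  split; [left; trivial | split].
  - intros U V [HU | HU] [HV | HV]; [left | right | right | right]; firstorder.
  - intros F HF; destruct (classic (exists U, F U /\ forall x, U x)) as [[U [FU HU]] | Hno].
    + left; intros x; exists U; auto.
    + right; intros x [U [FU Ux]].
      destruct (HF U FU) as [HU | HU]; [apply Hno | apply (HU x)]; eauto.
Qed.

Lemma concatN_l {A : Type} (f g : I01 -> A) s :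
  proj1_sig s <= 1/2 -> concatN f g s = f (clamp (2 * proj1_sig s)).
Proof. intros h; unfold concatN; destruct Rle_dec; [reflexivity | lra]. Qed.

Lemma concatN_r {A : Type} (f g : I01 -> A) s :
  1/2 < proj1_sig s -> concatN f g s = g (clamp (2 * proj1_sig s - 1)).
Proof. intros h; unfold concatN; destruct Rle_dec; [lra | reflexivity]. Qed.

Lemma concatN_I0 {A : Type} (f g : I01 -> A) : concatN f g I0 = f I0.
Proof. rewrite concatN_l by (simpl; lra); f_equal; apply clamp_eq; simpl; lra. Qed.

Lemma concatN_I1 {A : Type} (f g : I01 -> A) : concatN f g I1 = g I1.
Proof. rewrite concatN_r by (simpl; lra); f_equal; apply clamp_eq; simpl; lra. Qed.

Lemma concatN_strict_incr (F1 F2 : I01 -> R) :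
  strict_incr F1 -> strict_incr F2 -> F1 I1 <= F2 I0 -> strict_incr (concatN F1 F2).
Proof.
  intros H1 H2 Hjoin s t h; pose proof (proj2_sig s); pose proof (proj2_sig t).
  destruct (Rle_lt_dec (proj1_sig t) (1/2)) as [ht | ht].
  - rewrite !concatN_l by lra; apply H1; rewrite !clamp_val by lra; lra.
  - rewrite (concatN_r _ _ t ht).
    destruct (Rle_lt_dec (proj1_sig s) (1/2)) as [hs | hs].
    + rewrite concatN_l by lra.
      pose proof (strict_incr_le F1 H1 (clamp (2 * proj1_sig s)) I1
                    (proj2 (proj2_sig (clamp (2 * proj1_sig s))))).
      assert (F2 I0 < F2 (clamp (2 * proj1_sig t - 1)))
        by (apply H2; rewrite clamp_val by lra; simpl; lra).
      lra.
    + rewrite concatN_r by lra; apply H2; rewrite !clamp_val by lra; lra.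
Qed.

Lemma concatN_onto (F1 F2 : I01 -> R) :
  onto_interval F1 -> onto_interval F2 -> F1 I1 = F2 I0 -> onto_interval (concatN F1 F2).
Proof.
  intros H1 H2 Hjoin y; rewrite concatN_I0, concatN_I1; intros hy.
  destruct (Rle_lt_dec y (F1 I1)) as [h | h].
  - destruct (H1 y ltac:(lra)) as [s Hs]; pose proof (proj2_sig s).
    exists (clamp (proj1_sig s / 2)).
    rewrite concatN_l by (rewrite clamp_val; lra).
    rewrite clamp_val by lra; rewrite (clamp_eq _ s) by lra; exact Hs.
  - destruct (H2 y ltac:(lra)) as [s Hs]; pose proof (proj2_sig s).
    assert (0 < proj1_sig s).
    { destruct (Rle_lt_dec (proj1_sig s) 0) as [h0 | h0]; [| exact h0].
      rewrite (I01_eq s I0) in Hs by (simpl; lra); lra. }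
    exists (clamp ((1 + proj1_sig s) / 2)).
    rewrite concatN_r by (rewrite clamp_val; lra).
    rewrite clamp_val by lra; rewrite (clamp_eq _ s) by lra; exact Hs.
Qed.

Lemma lift_concat (p1 p2 F1 F2 : I01 -> R) :
  lift p1 F1 -> lift p2 F2 -> p1 I1 = p2 I0 -> exists F, lift (concatN p1 p2) F.
Proof.
  intros (S1 & O1 & Z1) (S2 & O2 & Z2) Hjoin.
  set (c := F1 I1 - F2 I0).
  assert (Hc : integral c).
  { replace c with ((p2 I0 - F2 I0) - (p1 I1 - F1 I1)) by (unfold c; rewrite Hjoin; ring).
    apply integral_sub; auto. }
  exists (concatN F1 (fun s => F2 s + c)); split; [| split].
  - apply concatN_strict_incr; [exact S1 | | unfold c; lra].
    intros s t h; pose proof (S2 s t h); lra.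
  - apply concatN_onto; [exact O1 | | unfold c; lra].
    intros y hy; destruct (O2 (y - c) ltac:(lra)) as [s Hs]; exists s; lra.
  - intros s; destruct (Rle_lt_dec (proj1_sig s) (1/2)) as [h | h].
    + rewrite !concatN_l by exact h; apply Z1.
    + rewrite !concatN_r by exact h.
      set (s' := clamp (2 * proj1_sig s - 1)).
      replace (_ - _) with ((p2 s' - F2 s') - c) by ring.
      apply integral_sub; auto.
Qed.

Lemma winding_concat (p1 p2 : I01 -> R) :
  winding p1 -> winding p2 -> winding (concatN p1 p2).
Proof.
  intros (A1 & B1 & F1 & L1) (A2 & B2 & F2 & L2).
  split; [rewrite concatN_I0; exact A1 | split; [rewrite concatN_I1; exact B2 |]].
  apply (lift_concat p1 p2 F1 F2 L1 L2); congruence.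
Qed.

Lemma winding_reparam (p : I01 -> R) (phi : I01 -> I01) :
  winding p -> in_G11 phi -> winding (fun t => p (phi t)).
Proof.
  intros (A & B & F & SF & OF & IF) Hphi.
  unfold winding; cbv beta; rewrite (G11_I0 phi Hphi), (G11_I1 phi Hphi).
  split; [exact A | split; [exact B |]].
  exists (fun t => F (phi t)); split; [| split].
  - intros s t h; apply SF, (G11_strict phi Hphi), h.
  - intros y; rewrite (G11_I0 phi Hphi), (G11_I1 phi Hphi); intros hy.
    destruct (OF y hy) as [s Hs]; destruct (G11_surj phi Hphi s) as [t Ht].
    exists t; rewrite Ht; exact Hs.
  - intros s; apply IF.
Qed.

Lemma dcircle_md : is_md dcircle.
Proof.
  split; [exact dcircle_topology | split; [| split]].
  - intros p (A & B & _); split; [| split; assumption].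
    apply continuous_into_dcircle.
    + intros U HU x _; exists 1; split; [lra | intros; apply HU].
    + intros U HU x Ux; exfalso; exact (HU x Ux).
  - intros p phi Hp Hphi; apply winding_reparam; assumption.
  - intros p1 p2 H1 H2 _; apply winding_concat; assumption.
Qed.

(** * Globular cells *)

Lemma open_of_ne (s : I01) : proj1_sig s <> 0 -> proj1_sig s <> 1 -> 0 < proj1_sig s < 1.
Proof. pose proof (proj2_sig s); simpl in *; lra. Qed.

Definition glob_pt {Z : Type} (z : Z) (s : I01) : gpt Z :=
  match Req_EM_T (proj1_sig s) 0 with
  | left _ => gbot
  | right h0 =>
      match Req_EM_T (proj1_sig s) 1 with
      | left _ => gtop
      | right h1 => gin z (exist _ (proj1_sig s) (open_of_ne s h0 h1))
      end
  end.

Lemma qrel_glob_pt {Z : Type} (z : Z) (s : I01) : qrel (z, s) (glob_pt z s).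
Proof. unfold glob_pt; destruct Req_EM_T; [| destruct Req_EM_T]; simpl; auto. Qed.

Lemma qrel_functional {Z : Type} (p : Z * I01) (y y' : gpt Z) :
  qrel p y -> qrel p y' -> y = y'.
Proof.
  destruct p as [z s]; intros H1 H2.
  destruct y as [| | z1 [t1 h1]], y' as [| | z2 [t2 h2]]; simpl in H1, H2;
    try reflexivity; try (exfalso; lra);
    try (match type of H1 with _ /\ _ => destruct H1 as [_ ?]; exfalso; lra end);
    try (match type of H2 with _ /\ _ => destruct H2 as [_ ?]; exfalso; lra end).
  destruct H1 as [-> ->], H2 as [-> E]; subst t2.
  f_equal; f_equal; apply proof_irrelevance.
Qed.

Lemma glob_map_glob_pt {Z Z' : Type} (f : Z -> Z') (z : Z) (s : I01) :
  glob_map f (glob_pt z s) = glob_pt (f z) s.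
Proof. unfold glob_pt; destruct Req_EM_T; [| destruct Req_EM_T]; reflexivity. Qed.

Definition on_sphere {n : nat} (z : Disk n) : Prop := sumsq n (proj1_sig z) = 1.

Definition sph_of {n : nat} (z : Disk n) (e : sumsq n (proj1_sig z) = 1) : Sph n :=
  exist _ (proj1_sig z) (conj (proj1 (proj2_sig z)) e).

Lemma sph_incl_of (n : nat) (z : Disk n) e : sph_incl n (sph_of z e) = z.
Proof.
  destruct z as [x px]; unfold sph_incl, sph_of; simpl; f_equal; apply proof_irrelevance.
Qed.

Lemma sph_of_incl (n : nat) (w : Sph n) e : sph_of (sph_incl n w) e = w.
Proof.
  destruct w as [x px]; unfold sph_incl, sph_of; simpl; f_equal; apply proof_irrelevance.
Qed.

Lemma disk_glob_cases (n : nat) (y : gpt (Disk n)) :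
  (exists y', y = glob_map (sph_incl n) y') \/
  (exists z s, y = gin z s /\ ~ on_sphere z).
Proof.
  destruct y as [| | z s]; [left; exists gbot; reflexivity | left; exists gtop; reflexivity |].
  destruct (Req_EM_T (sumsq n (proj1_sig z)) 1) as [e | e].
  - left; exists (gin (sph_of z e) s); simpl; rewrite sph_incl_of; reflexivity.
  - right; exists z, s; auto.
Qed.

Lemma mor_state_zero (Y : MdSpace) (h : Y -> R) (y : Y) :
  is_mor Y dcircle h -> states Y y -> h y = 0.
Proof. intros (_ & Hs & _) Hy; exact (Hs y Hy). Qed.

(* Away from the attaching sphere, the cell winds once around the circle. *)
Definition cell_height (n : nat) {Y : Type} (g : gpt (Sph n) -> Y) (h : Y -> R)
  (y : gpt (Disk n)) : R :=
  match y with
  | gin z s =>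
      match Req_EM_T (sumsq n (proj1_sig z)) 1 with
      | left e => h (g (gin (sph_of z e) s))
      | right _ => proj1_sig s
      end
  | _ => 0
  end.

Section CellHeight.
Variables (n : nat) (Y : MdSpace) (g : Glob (SphSp n) -> Y) (h : Y -> R).
Hypotheses (Hg : is_mor (Glob (SphSp n)) Y g) (Hh : is_mor Y dcircle h).

Lemma cell_height_attach (y : gpt (Sph n)) :
  cell_height n g h (glob_map (sph_incl n) y) = h (g y).
Proof.
  destruct y as [| | w s]; simpl.
  - symmetry; apply mor_state_zero, (proj1 (proj2 Hg)); simpl; auto.
  - symmetry; apply mor_state_zero, (proj1 (proj2 Hg)); simpl; auto.
  - destruct Req_EM_T as [e | e]; [rewrite sph_of_incl; reflexivity |].
    exfalso; exact (e (proj2 (proj2_sig w))).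
Qed.

Lemma cell_height_interior (z : Disk n) (s : O01) :
  ~ on_sphere z -> cell_height n g h (gin z s) = proj1_sig s.
Proof. intros e; simpl; destruct Req_EM_T; [contradiction | reflexivity]. Qed.

Lemma cell_path_interior (z : Disk n) (phi : I01 -> I01) (gam : I01 -> gpt (Disk n)) :
  ~ on_sphere z -> in_G11 phi -> (forall t, qrel (z, phi t) (gam t)) ->
  winding (fun t => cell_height n g h (gam t)).
Proof.
  intros hz Hphi Hq.
  assert (Hend : forall t, proj1_sig (phi t) = 0 \/ proj1_sig (phi t) = 1 ->
              cell_height n g h (gam t) = 0).
  { intros t Ht; specialize (Hq t); destruct (gam t) as [| | z' s]; [reflexivity | reflexivity |].
    destruct Hq as [_ E]; pose proof (proj2_sig s); simpl in *; lra. }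
  split; [apply Hend; rewrite (G11_I0 phi Hphi); simpl; auto |].
  split; [apply Hend; rewrite (G11_I1 phi Hphi); simpl; auto |].
  exists (fun t => proj1_sig (phi t)).
  split; [exact (G11_strict phi Hphi) | split; [exact (G11_onto phi Hphi) |]].
  intros t; specialize (Hq t); destruct (gam t) as [| | z' s]; simpl in Hq |- *.
  - exists 0%Z; simpl; lra.
  - exists (-1)%Z; simpl; lra.
  - destruct Hq as [-> E]; destruct Req_EM_T; [contradiction |].
    exists 0%Z; simpl; lra.
Qed.

Lemma cell_path_sphere (z : Disk n) (e : on_sphere z) (phi : I01 -> I01)
  (gam : I01 -> gpt (Disk n)) :
  in_G11 phi -> (forall t, qrel (z, phi t) (gam t)) ->
  winding (fun t => cell_height n g h (gam t)).
Proof.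
  intros Hphi Hq; set (w := sph_of z e).
  assert (Hw : paths (Glob (SphSp n)) (fun t => glob_pt w (phi t)))
    by (exists w, phi; split; [exact Hphi | intros t; apply qrel_glob_pt]).
  replace (fun t => cell_height n g h (gam t)) with (fun t => h (g (glob_pt w (phi t))));
    [exact (proj2 (proj2 Hh) _ (proj2 (proj2 Hg) _ Hw)) |].
  apply functional_extensionality; intros t.
  rewrite <- cell_height_attach, glob_map_glob_pt; unfold w; rewrite sph_incl_of.
  f_equal; eapply qrel_functional; [apply qrel_glob_pt | apply Hq].
Qed.

Lemma cell_height_mor : is_mor (Glob (DiskSp n)) dcircle (cell_height n g h).
Proof.
  split; [| split].
  - apply continuous_into_dcircle.
    + intros U HU p _; exists (fun _ => True), (fun _ => True).
      split; [intros x _; exists 1; split; [lra | auto] |].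
      split; [intros x _; exists 1; split; [lra | auto] |].
      split; [exact I | split; [exact I |]].
      intros a b _ _; exists (glob_pt a b); split; [apply qrel_glob_pt | apply HU].
    + intros U HU p [y [_ Uy]]; destruct (HU y Uy).
  - intros y [-> | ->]; reflexivity.
  - intros gam (z & phi & Hphi & Hq).
    destruct (Req_EM_T (sumsq n (proj1_sig z)) 1) as [e | e].
    + exact (cell_path_sphere z e phi gam Hphi Hq).
    + exact (cell_path_interior z phi gam e Hphi Hq).
Qed.

End CellHeight.

(** * Cellular towers *)

Lemma is_mor_comp (A B C : MdSpace) (f : A -> B) (g : B -> C) :
  is_mor A B f -> is_mor B C g -> is_mor A C (fun x => g (f x)).
Proof.
  intros (c1 & s1 & p1) (c2 & s2 & p2); split; [| split].
  - intros U HU; apply (c1 (fun y => U (g y))), c2, HU.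
  - intros x hx; apply s2, s1, hx.
  - intros gam hg; apply (p2 (fun t => f (gam t))), p1, hg.
Qed.

Section Tower.
Variables (O : Type) (lt : O -> O -> Prop) (X : O -> MdSpace) (m : forall a b, X a -> X b).
Hypothesis HT : is_cell_tower lt X m.

Lemma leo_refl a : leo lt a a.
Proof. right; reflexivity. Qed.

Lemma leo_trans a b c : leo lt a b -> leo lt b c -> leo lt a c.
Proof.
  destruct HT as [[Htrans _] _].
  intros [h1 | ->] [h2 | ->]; [left; eapply Htrans; eauto | left | left | right]; auto.
Qed.

Lemma tower_mor a b : leo lt a b -> is_mor (X a) (X b) (m a b).
Proof. destruct HT as (_ & _ & h & _); apply h. Qed.

Lemma tower_id a x : m a a x = x.
Proof. destruct HT as (_ & _ & _ & h & _); apply h. Qed.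

Lemma tower_comp a b c x : leo lt a b -> leo lt b c -> m b c (m a b x) = m a c x.
Proof. destruct HT as (_ & _ & _ & _ & h & _); intros; apply h; assumption. Qed.

Definition succ (a a' : O) : Prop := lt a a' /\ forall c, ~ (lt a c /\ lt c a').

Definition is_limit (a : O) : Prop :=
  (exists b, lt b a) /\ forall b, lt b a -> exists c, lt b c /\ lt c a.

Lemma stage_cases a :
  (forall b, ~ lt b a) \/ (exists b, succ b a) \/ is_limit a.
Proof.
  destruct (classic (exists b, lt b a)) as [[b0 Hb0] | Hmin];
    [| left; intros b hb; apply Hmin; exists b; exact hb].
  destruct (classic (exists b, succ b a)) as [Hs | Hns]; [right; left; exact Hs |].
  right; right; split; [exists b0; exact Hb0 |].
  intros b hb; apply NNPP; intros Hno; apply Hns; exists b; split; [exact hb |].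
  intros c Hc; apply Hno; exists c; exact Hc.
Qed.

Lemma succ_unique b b' a : succ b a -> succ b' a -> b = b'.
Proof.
  destruct HT as [[_ [_ [Htri _]]] _].
  intros [h1 h2] [h1' h2']; destruct (Htri b b') as [h | [h | h]]; auto.
  - destruct (h2 b'); auto.
  - destruct (h2' b); auto.
Qed.

Lemma below_succ b a c : succ b a -> lt c a -> leo lt c b.
Proof.
  destruct HT as [[_ [_ [Htri _]]] _].
  intros [h1 h2] h; destruct (Htri c b) as [e | [e | e]]; [left | right |]; auto.
  destruct (h2 c); auto.
Qed.

Record attachment (a a' : O) := {
  adim : nat;
  aattach : Glob (SphSp adim) -> X a;
  achar : Glob (DiskSp adim) -> X a';
  aattach_mor : is_mor (Glob (SphSp adim)) (X a) aattach;
  apushout : @is_pushout (Glob (SphSp adim)) (Glob (DiskSp adim)) (X a) (X a')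
               (glob_map (sph_incl adim)) aattach achar (m a a') }.

Lemma attachment_inhabited a a' : succ a a' -> inhabited (attachment a a').
Proof.
  intros [h1 h2]; destruct HT as (_ & _ & _ & _ & _ & _ & Hcell & _).
  destruct (Hcell a a' h1 h2) as (n & g & k & Hg & Hpo).
  exact (inhabits (Build_attachment a a' n g k Hg Hpo)).
Qed.

Definition attach a a' (H : succ a a') : attachment a a' :=
  epsilon (attachment_inhabited a a' H) (fun _ => True).

(* The minimal stage needs no clause: its points are states, which every morphism to [dcircle]
   sends to 0. *)
Definition canonical a (h : X a -> R) : Prop :=
  is_mor (X a) dcircle h /\
  forall b b' (H : succ b b'), leo lt b' a -> forall z s, ~ on_sphere z ->
    h (m b' a (achar _ _ (attach b b' H) (gin z s))) = proj1_sig s.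

Lemma canonical_restrict a b h :
  canonical a h -> leo lt b a -> canonical b (fun x => h (m b a x)).
Proof.
  intros (Hm & Hcell) hba; split.
  - apply is_mor_comp; [apply tower_mor, hba | exact Hm].
  - intros b1 b1' H h1 z s hz; rewrite tower_comp by assumption.
    apply Hcell; [eapply leo_trans; eauto | exact hz].
Qed.

Lemma canonical_unique_succ b a (Hs : succ b a) :
  (forall h h', canonical b h -> canonical b h' -> forall x, h x = h' x) ->
  forall h h', canonical a h -> canonical a h' -> forall x, h x = h' x.
Proof.
  intros IH h h' Hh Hh'.
  set (c := attach b a Hs).
  destruct (apushout _ _ c) as (_ & _ & Hcomm & Huniv).
  assert (Hba : leo lt b a) by (left; apply Hs).
  assert (Hlow : forall x, h' (m b a x) = h (m b a x))
    by (intros x; symmetry; apply (IH (fun y => h (m b a y)) (fun y => h' (m b a y)));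
        apply canonical_restrict; assumption).
  destruct (Huniv dcircle dcircle_md (fun y => h (achar _ _ c y)) (fun x => h (m b a x)))
    as [_ Huniq].
  - apply is_mor_comp; [apply (apushout _ _ c) | apply Hh].
  - apply is_mor_comp; [apply tower_mor, Hba | apply Hh].
  - intros y; simpl; rewrite Hcomm; reflexivity.
  - symmetry; apply (Huniq h' h (proj1 Hh') (proj1 Hh)); [| exact Hlow | reflexivity | reflexivity].
    intros y; destruct (disk_glob_cases _ y) as [[y' ->] | (z & s & -> & hz)].
    + rewrite !Hcomm; apply Hlow.
    + pose proof (proj2 Hh b a Hs (leo_refl a) z s hz) as E.
      pose proof (proj2 Hh' b a Hs (leo_refl a) z s hz) as E'.
      rewrite tower_id in E, E'; cbv beta; unfold c; congruence.
Qed.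

Lemma canonical_unique_limit a (Ha : is_limit a) :
  (forall b, lt b a -> forall h h', canonical b h -> canonical b h' -> forall x, h x = h' x) ->
  forall h h', canonical a h -> canonical a h' -> forall x, h x = h' x.
Proof.
  intros IH h h' Hh Hh'.
  destruct HT as (_ & _ & _ & _ & _ & _ & _ & Hlim).
  destruct (Hlim a (proj1 Ha) (proj2 Ha)) as (_ & _ & Hcolim).
  destruct (Hcolim dcircle dcircle_md (fun b x => h (m b a x))) as [_ Huniq].
  - intros b hb; apply is_mor_comp; [apply tower_mor; left; exact hb | apply Hh].
  - intros b1 b2 h1 h2 h12 x; rewrite tower_comp; [reflexivity | exact h12 | left; exact h2].
  - apply (Huniq h h' (proj1 Hh) (proj1 Hh')); [reflexivity |].
    intros b hb x; symmetry;
      apply (IH b hb (fun y => h (m b a y)) (fun y => h' (m b a y)));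
      apply canonical_restrict; auto; left; exact hb.
Qed.

Lemma canonical_unique a :
  forall h h', canonical a h -> canonical a h' -> forall x, h x = h' x.
Proof.
  destruct HT as [[_ [_ [_ Hwf]]] _].
  induction a as [a IH] using (well_founded_ind Hwf).
  destruct (stage_cases a) as [Hmin | [[b Hs] | Hlim]].
  - destruct HT as (_ & _ & _ & _ & _ & Hbase & _).
    intros h h' Hh Hh' x.
    rewrite (mor_state_zero _ h x (proj1 Hh)), (mor_state_zero _ h' x (proj1 Hh'));
      [reflexivity | apply (Hbase a Hmin) ..].
  - apply (canonical_unique_succ b a Hs), IH, Hs.
  - apply (canonical_unique_limit a Hlim IH).
Qed.

Lemma canonical_base a : (forall b, ~ lt b a) -> canonical a (fun _ => 0).
Proof.
  intros Hmin; destruct HT as (_ & _ & _ & _ & _ & Hbase & _).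
  destruct (Hbase a Hmin) as (_ & Hopn & Hnopath).
  split; [split; [| split] |].
  - intros U _; apply Hopn.
  - intros x _; reflexivity.
  - intros g Hg; destruct (Hnopath g Hg).
  - destruct HT as [[Htrans _] _].
    intros b b' H [h | E]; pose proof (proj1 H) as hbb'.
    + destruct (Hmin b (Htrans _ _ _ hbb' h)).
    + subst b'; destruct (Hmin b hbb').
Qed.

Lemma canonical_succ b a (Hs : succ b a) hb :
  canonical b hb -> exists h, canonical a h.
Proof.
  intros Hhb; set (c := attach b a Hs).
  destruct (apushout _ _ c) as (_ & _ & _ & Huniv).
  destruct (Huniv dcircle dcircle_md (cell_height _ (aattach _ _ c) hb) hb)
    as [[u (Hu & Hchar & Hlow)] _].
  - apply cell_height_mor; [apply aattach_mor | apply Hhb].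
  - apply Hhb.
  - apply cell_height_attach; [apply aattach_mor | apply Hhb].
  - exists u; split; [exact Hu |].
    intros b1 b1' H1 [h1 | ->].
    + intros z s hz; pose proof (below_succ b a b1' Hs h1) as hb1.
      rewrite <- (tower_comp b1' b a) by (assumption || (left; apply Hs)).
      rewrite Hlow; apply (proj2 Hhb); assumption.
    + assert (E : b1 = b) by exact (succ_unique b1 b a H1 Hs); subst b1.
      rewrite (proof_irrelevance _ H1 Hs); fold c; intros z s hz.
      rewrite tower_id, Hchar; apply cell_height_interior; exact hz.
Qed.

Lemma colim_canonical (P : O -> Prop) (Y : MdSpace) (l : forall a, X a -> Y) :
  is_colim lt X m P Y l -> (forall c, P c -> exists h, canonical c h) ->
  exists u, is_mor Y dcircle u /\ forall c, P c -> canonical c (fun x => u (l c x)).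
Proof.
  intros (_ & _ & Hcolim) Hex.
  set (q c := epsilon (inhabits (fun _ : X c => 0)) (canonical c)).
  assert (Hq : forall c, P c -> canonical c (q c))
    by (intros c Pc; apply epsilon_spec, Hex, Pc).
  destruct (Hcolim dcircle dcircle_md q) as [[u [Hu Hul]] _].
  - intros c Pc; apply Hq, Pc.
  - intros c1 c2 P1 P2 h12 x.
    apply (canonical_unique c1 (fun y => q c2 (m c1 c2 y)) (q c1));
      [apply canonical_restrict; [apply Hq |] | apply Hq]; assumption.
  - exists u; split; [exact Hu |]; intros c Pc.
    replace (fun x => u (l c x)) with (q c); [apply Hq, Pc |].
    apply functional_extensionality; intros x; symmetry; apply Hul, Pc.
Qed.

Lemma canonical_limit a (Ha : is_limit a) :
  (forall b, lt b a -> exists h, canonical b h) -> exists h, canonical a h.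
Proof.
  intros IH; destruct HT as (_ & _ & _ & _ & _ & _ & _ & Hlim).
  destruct (colim_canonical (fun b => lt b a) (X a) (fun b => m b a)
              (Hlim a (proj1 Ha) (proj2 Ha)) IH) as [u [Hu Hres]].
  exists u; split; [exact Hu |].
  intros b b' H [h1 | ->] z s hz.
  - pose proof (proj2 (Hres b' h1) b b' H (leo_refl b') z s hz) as E.
    cbv beta in E; rewrite tower_id in E; exact E.
  - destruct (proj2 Ha b (proj1 H)) as [c [h1 h2]]; destruct (proj2 H c); auto.
Qed.

Lemma canonical_exists a : exists h, canonical a h.
Proof.
  destruct HT as [[_ [_ [_ Hwf]]] _].
  induction a as [a IH] using (well_founded_ind Hwf).
  destruct (stage_cases a) as [Hmin | [[b Hs] | Hlim]].
  - exists (fun _ => 0); apply canonical_base, Hmin.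
  - destruct (IH b (proj1 Hs)) as [hb Hhb]; apply (canonical_succ b a Hs hb Hhb).
  - apply (canonical_limit a Hlim IH).
Qed.

End Tower.

Lemma cellular_mor_dcircle (Y : MdSpace) : cellular Y -> exists u, is_mor Y dcircle u.
Proof.
  intros (_ & O & lt & X & m & l & HT & Hcolim).
  destruct (colim_canonical O lt X m HT (fun _ => True) Y l Hcolim) as [u [Hu _]].
  - intros c _; apply canonical_exists.
  - exists u; exact Hu.
Qed.

Theorem theorem6p6 (X : MdSpace) (HX : cellular X)
  (g1 g2 : I01 -> X) (Hg1 : paths X g1) (Hg2 : paths X g2)
  (phi1 phi2 : I01 -> I01)
  (Hnd1 : nondecr phi1) (Hnd2 : nondecr phi2)
  (H10 : phi1 I0 = I0) (H11 : phi1 I1 = I1)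
  (H20 : phi2 I0 = I0) (H21 : phi2 I1 = I1)
  (Hc1 : forall t, g1 (phi1 t) = g2 t)
  (Hc2 : forall t, g1 t = g2 (phi2 t)) :
  in_G11 phi1 /\ in_G11 phi2 /\
  (forall t, phi1 (phi2 t) = t) /\ (forall t, phi2 (phi1 t) = t).
Proof.
  (* The endpoint hypotheses H10 .. *)
  destruct (cellular_mor_dcircle X HX) as [u (_ & _ & Hu)].
  destruct (Hu g1 Hg1) as (_ & _ & F1 & L1).
  destruct (Hu g2 Hg2) as (_ & _ & F2 & L2).
  assert (E12 : forall t, phi1 (phi2 t) = t).
  { apply (lift_rigid _ F1 _ L1); [intros s t h; apply Hnd1, Hnd2, h |].
    intros s; rewrite Hc1, <- Hc2; reflexivity. }
  assert (E21 : forall t, phi2 (phi1 t) = t).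
  { apply (lift_rigid _ F2 _ L2); [intros s t h; apply Hnd2, Hnd1, h |].
    intros s; rewrite <- Hc2, Hc1; reflexivity. }
  split; [apply (G11_of_inverse phi1 phi2); assumption |].
  split; [apply (G11_of_inverse phi2 phi1); assumption |].
  split; assumption.
Qed.
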